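(* Let $\lambda\in\mathbb R$ with $\alpha=1-\lambda>0$, and let $\mathcal Q_\lambda$ be a $\lambda$-exponential family satisfying Assumptions A and B. Let $x_1,\dots,x_N\in\mathcal X$ be data such that $x_i\in S_\vartheta$ for all $i$ and all $\vartheta\in\operatorname{dom}\varphi_\lambda$. Set $\bar T=\frac1N\sum_{i=1}^NT(x_i)$ and suppose there exists $\vartheta_*\in\operatorname{dom}\varphi_\lambda$ with $q^{(\alpha)}_{\vartheta_*}(T)=\bar T$. Let $\ell(\vartheta)=\sum_{i=1}^N\log q_\vartheta(x_i)$. (i) If $\lambda=0$, $\vartheta_*$ maximizes $\ell$ over $\operatorname{dom}\varphi_\lambda$. (ii) If $\lambda<0$, $\vartheta_*$ maximizes over $\operatorname{dom}\varphi_\lambda$ the function $\vartheta\mapsto N\big(c_\lambda(\vartheta,\bar T)-\varphi_\lambda(\vartheta)\big)$, which is a lower bound of $\ell$ on $\operatorname{dom}\varphi_\lambda$; moreover $\frac1N\sum_{i=1}^N\log q_{\vartheta_*}(x_i)\ge\psi_\lambda(\vartheta_* )$. (iii) If $\lambda>0$, $\vartheta_*$ maximizes over $\operatorname{dom}\varphi_\lambda$ the function $\vartheta\mapsto N\big(c_\lambda(\vartheta,\bar T)-\varphi_\lambda(\vartheta)\big)$, which is an upper bound of $\ell$ on $\operatorname{dom}\varphi_\lambda$; moreover $\frac1N\sum_{i=1}^N\log q_\vartheta(x_i)\le\psi_\lambda(\vartheta_* )$ for all $\vartheta\in\operatorname{dom}\varphi_\lambda$.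
   Context: $\mathcal H$ is a finite-dimensional real Hilbert space; $\mathcal X$ a measurable space with measure $m$; $p(f)=\int fp\,dm$. Conventions $\log s=-\infty$ for $s\le0$, $\exp(-\infty)=0$. Coupling $c_\lambda(u,v)=\frac1\lambda\log(1+\lambda\langle u,v\rangle)$ ($\lambda\ne0$), $c_0=\langle\cdot,\cdot\rangle$. For measurable $T:\mathcal X\to\mathcal H$: $\varphi_\lambda(\vartheta)=\log\int\exp(c_\lambda(\vartheta,T))dm$, $\operatorname{dom}\varphi_\lambda=\{\varphi_\lambda<+\infty\}$, $q_\vartheta=\exp(c_\lambda(\vartheta,T)-\varphi_\lambda(\vartheta))$, $\mathcal Q_\lambda=\{q_\vartheta:\vartheta\in\operatorname{dom}\varphi_\lambda\}$, support $S_\vartheta=\{x:1+\lambda\langle\vartheta,T(x)\rangle>0\}$. Escort $p^{(\alpha)}=p^\alpha/\int p^\alpha dm$; $p_{|Y}=p\mathbf 1_Y$. Rényi entropy $H_\alpha(p)=\frac1{1-\alpha}\log\int p^\alpha dm$ ($\alpha\ne1$), $H_1(p)=-\int p\log p\,dm$; $\psi_\lambda(\vartheta)=-H_\alpha(q_\vartheta)$. Compatibility: $p$ is $q_\vartheta$-compatible if $\int p_{|S_\vartheta}^\alpha dm\in(0,\infty)$ and $\int Tp_{|S_\vartheta}^\alpha dm$ has finite components; $\mathcal Q_\lambda$-compatible if for every $\vartheta\in\operatorname{dom}\varphi_\lambda$. Assumption A: $\alpha>0$ and $\varphi_\lambda$ proper (never $-\infty$, nonempty domain). Assumption B: there is a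 nonempty $S_\lambda$ with $S_\vartheta=S_\lambda$ for all $\vartheta\in\operatorname{dom}\varphi_\lambda$, and each $q_\vartheta\in\mathcal Q_\lambda$ is $\mathcal Q_\lambda$-compatible. *)

From HB Require Import structures.
From mathcomp Require Import all_boot all_order all_algebra.
From mathcomp Require Import all_classical all_reals all_analysis.
Set Implicit Arguments. Unset Strict Implicit. Unset Printing Implicit Defensive.
Import Order.TTheory GRing.Theory Num.Theory.
Local Open Scope ring_scope.
Local Open Scope classical_set_scope.

Section LambdaExp.
Context {R : realType} {n : nat} {d : measure_display} {X : measurableType d}.

(* The finite-dimensional real Hilbert space H is modelled as 'rV[R]_n
   with the standard inner product. *)
Definition dot (u v : 'rV[R]_n) : R := \sum_(i < n) u 0 i * v 0 i.

Definition elog (s : \bar R) : \bar R :=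
  match s with
  | EFin r => if 0 < r then (ln r)%:E else -oo%E
  | +oo%E => +oo%E
  | -oo%E => -oo%E
  end.

Definition eexp (s : \bar R) : \bar R :=
  match s with
  | EFin r => (expR r)%:E
  | +oo%E => +oo%E
  | -oo%E => 0%E
  end.

(* coupling c_lambda; outside {1 + lambda <u,v> > 0} it is -oo, so that
   exp(c_lambda) vanishes there (cf. the support S_theta). *)
Definition clam (l : R) (u v : 'rV[R]_n) : \bar R :=
  if l == 0 then (dot u v)%:E
  else if 0 < 1 + l * dot u v then (ln (1 + l * dot u v) / l)%:E
  else -oo%E.

Variables (m : {measure set X -> \bar R}) (T : X -> 'rV[R]_n).

Definition phi (l : R) (th : 'rV[R]_n) : \bar R :=
  elog (\int[m]_x eexp (clam l th (T x)))%E.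

Definition dom_phi (l : R) : set 'rV[R]_n := [set th | (phi l th < +oo)%E].

(* the density q_theta (meaningful for theta in dom_phi) *)
Definition qdens (l : R) (th : 'rV[R]_n) (x : X) : R :=
  fine (eexp (clam l th (T x) - phi l th)%E).

Definition supp (l : R) (th : 'rV[R]_n) : set X :=
  [set x | 0 < 1 + l * dot th (T x)].

Definition compatible (l : R) (p : X -> R) (th : 'rV[R]_n) : Prop :=
  let pS := fun x => if `[< supp l th x >] then p x else 0 in
  (0 < \int[m]_x ((pS x) `^ (1 - l))%:E)%E /\
  (\int[m]_x ((pS x) `^ (1 - l))%:E < +oo)%E /\
  (forall i : 'I_n, m.-integrable setT (fun x => (T x 0 i * (pS x) `^ (1 - l))%:E)).

Definition Qcompatible (l : R) (p : X -> R) : Prop :=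
  forall th, dom_phi l th -> compatible l p th.

Definition assumptionA (l : R) : Prop :=
  0 < 1 - l /\ (forall th, phi l th <> -oo%E) /\ (exists th, dom_phi l th).

Definition assumptionB (l : R) : Prop :=
  (exists S : set X, S !=set0 /\ forall th, dom_phi l th -> supp l th = S) /\
  (forall th, dom_phi l th -> Qcompatible l (qdens l th)).

Definition escort_mean (l : R) (th : 'rV[R]_n) : 'rV[R]_n :=
  \row_(i < n) (fine (\int[m]_x (T x 0 i * (qdens l th x) `^ (1 - l))%:E)%E /
                fine (\int[m]_x ((qdens l th x) `^ (1 - l))%:E)%E).

Definition renyi (alpha : R) (p : X -> R) : \bar R :=
  if alpha == 1 then (- \int[m]_x (p x * ln (p x))%:E)%E
  else (((1 - alpha)^-1)%:E * elog (\int[m]_x ((p x) `^ alpha)%:E))%E.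

Definition psi (l : R) (th : 'rV[R]_n) : \bar R := (- renyi (1 - l) (qdens l th))%E.

End LambdaExp.

From HB Require Import structures.
From mathcomp Require Import all_boot all_order all_algebra.
From mathcomp Require Import all_classical all_reals all_analysis.
From mathcomp Require Import measurable_realfun ring lra.
Set Implicit Arguments. Unset Strict Implicit. Unset Printing Implicit Defensive.
Import Order.TTheory GRing.Theory Num.Theory.
Local Open Scope ring_scope.
Local Open Scope classical_set_scope.

(* Write q⋆ for q_θ⋆, Z(θ) = exp φ(θ), W = ∫ q⋆^α and E = q⋆^(α)(T). Since all
   q_θ share the support S, on S one has (1 + λ⟨θ,T⟩) q⋆^α Z(θ)^(-λ) =
   q_θ^λ q⋆^(1-λ). Integrating the weighted AM-GM inequality
   q_θ^λ q⋆^(1-λ) ≤ λ q_θ + (1-λ) q⋆ (reversed when λ < 0) thus gives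
   λ W (1 + λ⟨θ,E⟩) Z(θ)^(-λ) ≤ λ, with equality at θ⋆. Taking logarithms,
   θ ↦ c_λ(θ,E) - φ(θ) is maximal at θ⋆, where it equals ψ_λ(θ⋆) = -log W / λ;
   for λ = 0 this maximality is Gibbs' inequality. Finally
   ℓ(θ) = Σ c_λ(θ,T(x_i)) - N φ(θ), and concavity of log compares
   Σ c_λ(θ,T(x_i)) with N c_λ(θ,T̄) in the direction given by the sign of λ. *)

Section exp_ln_inequalities.
Context {R : realType}.

(* For [l < 0], [b] is the convex combination of [a] and [l a + (1 - l) b]
   with weights [-l/(1 - l)] and [1/(1 - l)], whence the reverse inequality. *)
Lemma weighted_amgm (l a b : R) : l < 1 -> 0 < a -> 0 < b ->
  l * expR (l * ln a + (1 - l) * ln b) <= l * (l * a + (1 - l) * b).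
Proof.
move=> l_lt1 a_gt0 b_gt0.
have amgm (t : R) (u v : R) : 0 <= t -> t <= 1 ->
    expR (t * u + (1 - t) * v) <= t * expR u + (1 - t) * expR v.
  by move=> t0 t1; have := convex_expR (Itv01 t0 t1) u v; rewrite !convRE.
have [l_lt0|l_gt0|->] := ltgtP l 0; last by rewrite !mul0r.
- set c := l * ln a + (1 - l) * ln b.
  have al : 0 < 1 - l by lra.
  have t0 : 0 <= (1 - l)^-1 by rewrite invr_ge0 ltW.
  have t1 : (1 - l)^-1 <= 1 by rewrite invf_le1; lra.
  have := amgm _ c (ln a) t0 t1.
  have -> : (1 - l)^-1 * c + (1 - (1 - l)^-1) * ln a = ln b.
    by rewrite /c; field; lra.
  rewrite !lnK ?posrE // => h.
  have := ler_wpM2l (ltW al) h.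
  have -> : (1 - l) * ((1 - l)^-1 * expR c + (1 - (1 - l)^-1) * a) =
            expR c - l * a by field; lra.
  nra.
- rewrite ler_pM2l //; have := amgm _ (ln a) (ln b) (ltW l_gt0) (ltW l_lt1).
  by rewrite !lnK ?posrE.
Qed.

Lemma expR_tangent_le (c u : R) : expR c * (1 + (u - c)) <= expR u.
Proof.
have -> : expR u = expR (u - c) * expR c by rewrite -expRD subrK.
by rewrite mulrC ler_wpM2r ?expR_ge0 ?expR_ge1Dx.
Qed.

Lemma sum_ln_le_ln_mean (N : nat) (y : 'I_N -> R) : (0 < N)%N ->
  (forall i, 0 < y i) -> \sum_i ln (y i) <= N%:R * ln (N%:R^-1 * \sum_i y i).
Proof.
move=> N_gt0 y_gt0.
have Npos : 0 < N%:R :> R by rewrite ltr0n.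
have sum_gt0 : 0 < \sum_i y i.
  rewrite (bigD1 (Ordinal N_gt0)) //= ltr_pwDl // sumr_ge0 // => i _.
  exact: ltW.
set M := N%:R^-1 * \sum_i y i.
have M_gt0 : 0 < M by rewrite mulr_gt0 // invr_gt0.
have tangent i : ln (y i) <= ln M + (y i / M - 1).
  have : -1 < y i / M - 1 by rewrite ltrBrDr addrC subrr divr_gt0.
  move/le_ln1Dx; rewrite addrC subrK lnM ?posrE ?invr_gt0 // lnV ?posrE //.
  lra.
apply: (le_trans (ler_sum _ (fun i _ => tangent i))).
rewrite big_split /= sumr_const card_ord -mulr_natl big_split /= sumrN.
rewrite sumr_const card_ord -mulr_natl -mulr_suml.
have -> : (\sum_i y i) / M = N%:R.
  by rewrite /M invfM invrK mulrCA divff ?mulr1 // gt_eqF.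
lra.
Qed.

Lemma ln_div_le0 (l P : R) : 0 < P -> l * P <= l -> ln P / l <= 0.
Proof.
move=> P_gt0; have [l_lt0|l_gt0|->] := ltgtP l 0; last by rewrite invr0 mulr0.
- rewrite -[X in _ <= X]mulr1 ler_nM2l // => /ln_ge0 lnP_ge0.
  by rewrite mulr_ge0_le0 // invr_le0 ltW.
- rewrite -[X in _ <= X]mulr1 ler_pM2l // => /ln_le0 lnP_le0.
  by rewrite mulr_le0_ge0 // invr_ge0 ltW.
Qed.

End exp_ln_inequalities.

Section real_integrable.
Context {R : realType} {d : measure_display} {X : measurableType d}.
Variable m : {measure set X -> \bar R}.
Implicit Types f g : X -> R.

Lemma integrable_ge0_lty f : measurable_fun setT f -> (forall x, 0 <= f x) ->
  (\int[m]_x (f x)%:E < +oo)%E -> m.-integrable setT (EFin \o f).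
Proof.
move=> mf f_ge0 f_lty; apply/integrableP; split; first exact/measurable_EFinP.
under eq_integral => x _ do rewrite /= ger0_norm ?f_ge0 //.
exact: f_lty.
Qed.

Lemma EFin_Rintegral f : m.-integrable setT (EFin \o f) ->
  (\int[m]_x f x)%:E = (\int[m]_x (f x)%:E)%E.
Proof. by move=> intf; rewrite fineK //; exact: integrable_fin_num. Qed.

Lemma integrableRZl k f : m.-integrable setT (EFin \o f) ->
  m.-integrable setT (EFin \o (fun x => k * f x)).
Proof. by move=> intf; apply: eq_integrable (integrableZl measurableT k intf). Qed.

Lemma integrableRZr k f : m.-integrable setT (EFin \o f) ->
  m.-integrable setT (EFin \o (fun x => f x * k)).
Proof.
by move=> /(integrableRZl k); apply: eq_integrable => // x _ /=; rewrite mulrC.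
Qed.

Lemma integrableRD f g : m.-integrable setT (EFin \o f) ->
  m.-integrable setT (EFin \o g) -> m.-integrable setT (EFin \o (f \+ g)).
Proof. by move=> intf intg; apply: eq_integrable (integrableD measurableT intf intg). Qed.

Lemma integrableR_sum (I : Type) (s : seq I) (f : I -> X -> R) :
  (forall i, m.-integrable setT (EFin \o f i)) ->
  m.-integrable setT (EFin \o (fun x => \sum_(i <- s) f i x)).
Proof.
move=> intf; rewrite /comp; under eq_fun do rewrite -sumEFin.
by apply: integrable_sum => // i _; exact: intf.
Qed.

Lemma Rintegral_sum (I : Type) (s : seq I) (f : I -> X -> R) :
  (forall i, m.-integrable setT (EFin \o f i)) ->
  \int[m]_x (\sum_(i <- s) f i x) = \sum_(i <- s) \int[m]_x f i x.
Proof.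
move=> intf; elim: s => [|i s IHs].
  by under eq_Rintegral do rewrite big_nil; rewrite big_nil Rintegral_cst // mul0r.
under eq_Rintegral do rewrite big_cons.
by rewrite big_cons RintegralD ?IHs //; exact: integrableR_sum.
Qed.

End real_integrable.

Section dot.
Context {R : realType} {n : nat}.
Implicit Types u v : 'rV[R]_n.

Lemma dotZr u v k : dot u (k *: v) = k * dot u v.
Proof. by rewrite /dot mulr_sumr; apply: eq_bigr => i _; rewrite mxE mulrCA. Qed.

Lemma dot_sumr u (I : Type) (s : seq I) (f : I -> 'rV[R]_n) :
  dot u (\sum_(i <- s) f i) = \sum_(i <- s) dot u (f i).
Proof.
rewrite /dot; under eq_bigr do rewrite summxE mulr_sumr.
exact: exchange_big.
Qed.

Lemma dotZl u v k : dot (k *: u) v = k * dot u v.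
Proof. by rewrite /dot mulr_sumr; apply: eq_bigr => i _; rewrite mxE mulrA. Qed.

Lemma dotBl u u' v : dot (u - u') v = dot u v - dot u' v.
Proof.
by rewrite /dot -sumrB; apply: eq_bigr => i _; rewrite !mxE mulrBl.
Qed.

End dot.

Section coupling.
Context {R : realType} {n : nat} (l : R).
Implicit Types u v : 'rV[R]_n.

(* Off {1 + l <u,v> > 0}, where [clam] is -oo, the value is junk. *)
Definition coupling u v : R :=
  if l == 0 then dot u v else ln (1 + l * dot u v) / l.

Lemma clamE u v : 0 < 1 + l * dot u v -> clam l u v = (coupling u v)%:E.
Proof. by rewrite /clam /coupling; case: ifP => // _ ->. Qed.

Lemma clam_Ny u v : ~~ (0 < 1 + l * dot u v) -> clam l u v = -oo%E.
Proof. by rewrite /clam; case: eqP => [->|_ /negbTE -> //]; rewrite mul0r addr0 ltr01. Qed.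

Lemma expR_coupling u v : l != 0 -> 0 < 1 + l * dot u v ->
  expR (l * coupling u v) = 1 + l * dot u v.
Proof. by move=> l_neq0 uv_gt0; rewrite /coupling (negbTE l_neq0) mulrC divfK // lnK. Qed.

Section sample_mean.
Variables (N : nat) (u : 'rV[R]_n) (v : 'I_N -> 'rV[R]_n).
Hypothesis N_gt0 : (0 < N)%N.
Hypothesis v_supp : forall i, 0 < 1 + l * dot u (v i).

Let mean := N%:R^-1 *: \sum_i v i.

Lemma affine_mean : 1 + l * dot u mean = N%:R^-1 * \sum_i (1 + l * dot u (v i)).
Proof.
rewrite dotZr dot_sumr big_split /= sumr_const card_ord -mulr_natl mulr1 -mulr_sumr.
by field; rewrite pnatr_eq0 -lt0n.
Qed.

Lemma affine_mean_gt0 : 0 < 1 + l * dot u mean.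
Proof.
rewrite affine_mean mulr_gt0 ?invr_gt0 ?ltr0n //.
by rewrite (bigD1 (Ordinal N_gt0)) //= ltr_pwDl // sumr_ge0 // => i _; exact: ltW.
Qed.

Lemma sum_ln_affine_le :
  \sum_i ln (1 + l * dot u (v i)) <= N%:R * ln (1 + l * dot u mean).
Proof. by rewrite affine_mean; exact: sum_ln_le_ln_mean. Qed.

Lemma sum_coupling_le : 0 < l -> \sum_i coupling u (v i) <= N%:R * coupling u mean.
Proof.
move=> l_gt0; rewrite /coupling gt_eqF // -mulr_suml mulrA ler_pM2r ?invr_gt0 //.
exact: sum_ln_affine_le.
Qed.

Lemma sum_coupling_ge : l < 0 -> N%:R * coupling u mean <= \sum_i coupling u (v i).
Proof.
move=> l_lt0; rewrite /coupling lt_eqF // -mulr_suml mulrA ler_nM2r ?invr_lt0 //.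
exact: sum_ln_affine_le.
Qed.

Lemma sum_coupling_eq : l = 0 -> \sum_i coupling u (v i) = N%:R * coupling u mean.
Proof.
move=> l0; rewrite /coupling l0 eqxx dotZr dot_sumr mulrA mulfV ?mul1r //.
by rewrite pnatr_eq0 -lt0n.
Qed.

End sample_mean.

End coupling.

Section lambda_family.
Context {R : realType} {n : nat} {d : measure_display} {X : measurableType d}.
Variables (m : {measure set X -> \bar R}) (T : X -> 'rV[R]_n) (l : R).
Hypothesis mT : forall i : 'I_n, measurable_fun setT (fun x => T x 0 i).
Hypothesis phi_neqNy : forall th, phi m T l th <> -oo%E.

Local Notation dom := (dom_phi m T l).
Local Notation q := (qdens m T l).

Definition expc (u v : 'rV[R]_n) : R :=
  if 0 < 1 + l * dot u v then expR (coupling l u v) else 0.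

Lemma eexp_clam u v : eexp (clam l u v) = (expc u v)%:E.
Proof. by rewrite /expc; case: ifPn => uv; [rewrite clamE | rewrite clam_Ny]. Qed.

Lemma expc_ge0 u v : 0 <= expc u v.
Proof. by rewrite /expc; case: ifP; rewrite ?expR_ge0. Qed.

Lemma measurable_dot u : measurable_fun setT (fun x => dot u (T x)).
Proof.
rewrite /dot; apply: measurable_sum => i.
by apply: measurable_funM => //; exact: mT.
Qed.

Lemma measurable_expc u : measurable_fun setT (fun x => expc u (T x)).
Proof.
have maffine : measurable_fun setT (fun x => 1 + l * dot u (T x)).
  by apply: measurable_funD => //; apply: measurable_funM => //; exact: measurable_dot.
apply: measurable_fun_ifT => //; first exact: measurable_fun_ltr maffine.
rewrite /coupling; case: (l == 0); apply: measurableT_comp => //.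
  exact: measurable_dot.
by apply: measurable_funM => //; apply: measurableT_comp.
Qed.

Definition partition th : R := fine (\int[m]_x eexp (clam l th (T x))).

Lemma integral_expc th : dom th ->
  (\int[m]_x (expc th (T x))%:E)%E = (partition th)%:E /\ 0 < partition th.
Proof.
have := @phi_neqNy th; rewrite /dom_phi /phi /partition /=.
under [in X in X -> _]eq_integral do rewrite eexp_clam.
under [in X in _ -> X]eq_integral do rewrite eexp_clam.
have : (0 <= \int[m]_x (expc th (T x))%:E)%E.
  by apply: integral_ge0 => x _; rewrite lee_fin expc_ge0.
by case: (\int[m]_x _)%E => [r| |] //=; case: ifP.
Qed.

Lemma phiE th : dom th -> phi m T l th = (ln (partition th))%:E.
Proof.
move=> /[dup] hd /integral_expc[int_expc Z_gt0].
by rewrite /phi; under eq_integral do rewrite eexp_clam; rewrite int_expc /= Z_gt0.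
Qed.

Lemma qdensE th : dom th -> q th = fun x => expc th (T x) / partition th.
Proof.
move=> hd; apply/funext => x; rewrite /qdens phiE // /expc.
case: ifPn => hx; first by rewrite clamE //= expRB lnK // posrE; case: (integral_expc hd).
by rewrite clam_Ny //= mul0r.
Qed.

Lemma qdens_ge0 th x : dom th -> 0 <= q th x.
Proof.
move=> hd; rewrite qdensE // divr_ge0 ?expc_ge0 //.
by case: (integral_expc hd) => _ /ltW.
Qed.

Lemma integrable_expc th : dom th ->
  m.-integrable setT (EFin \o (fun x => expc th (T x))).
Proof.
move=> hd; have [int_expc _] := integral_expc hd.
apply: integrable_ge0_lty => //.
- exact: measurable_expc.
- by move=> x; exact: expc_ge0.
- by rewrite int_expc ltry.
Qed.

Lemma integrable_qdens th : dom th -> m.-integrable setT (EFin \o q th).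
Proof. by move=> hd; rewrite qdensE //; apply/integrableRZr/integrable_expc. Qed.

Lemma Rintegral_qdens th : dom th -> \int[m]_x q th x = 1.
Proof.
move=> hd; have [int_expc Z_gt0] := integral_expc hd.
rewrite qdensE // RintegralZr //; last exact: integrable_expc.
by rewrite /Rintegral int_expc /= divff // gt_eqF.
Qed.

Lemma integrable_qdens_comb a b th th' : dom th -> dom th' ->
  m.-integrable setT (EFin \o fun x => a * q th x + b * q th' x).
Proof. by move=> hd hd'; apply: integrableRD; apply: integrableRZl; exact: integrable_qdens. Qed.

Lemma Rintegral_qdens_comb a b th th' : dom th -> dom th' ->
  \int[m]_x (a * q th x + b * q th' x) = a + b.
Proof.
move=> hd hd'; rewrite RintegralD //; try exact/integrableRZl/integrable_qdens.
by rewrite !RintegralZl ?Rintegral_qdens ?mulr1 //; exact: integrable_qdens.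
Qed.

Lemma qdens_supp th x : dom th -> supp T l th x ->
  q th x = expR (coupling l th (T x) - ln (partition th)).
Proof.
move=> hd hx; have [_ Z_gt0] := integral_expc hd.
by rewrite qdensE // /expc ifT // expRB lnK.
Qed.

Lemma qdens_nsupp th x : dom th -> ~ supp T l th x -> q th x = 0.
Proof. by move=> hd /negP hx; rewrite qdensE // /expc ifN // mul0r. Qed.

Lemma qdens_gt0 th x : dom th -> supp T l th x -> 0 < q th x.
Proof. by move=> hd hx; rewrite qdens_supp // expR_gt0. Qed.

Lemma measurable_qdens th : dom th -> measurable_fun setT (q th).
Proof. by move=> hd; rewrite qdensE //; apply: measurable_funM => //; exact: measurable_expc. Qed.

Lemma ln_qdens th x : dom th -> supp T l th x ->
  ln (q th x) = coupling l th (T x) - ln (partition th).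
Proof. by move=> hd hx; rewrite qdens_supp // expRK. Qed.


Section sample.
Variables (N : nat) (xs : 'I_N -> X).
Hypothesis N_gt0 : (0 < N)%N.
Hypothesis xs_supp : forall i th, dom th -> supp T l th (xs i).

Definition sample_mean := N%:R^-1 *: \sum_(i < N) T (xs i).
Definition loglik th := (\sum_(i < N) ln (q th (xs i)))%:E.
Definition surrogate th := (N%:R%:E * (clam l th sample_mean - phi m T l th))%E.

Lemma loglikE th : dom th ->
  loglik th = (\sum_i coupling l th (T (xs i)) - N%:R * ln (partition th))%:E.
Proof.
move=> hd; rewrite /loglik; under eq_bigr => i _ do rewrite (ln_qdens hd (xs_supp i hd)).
by rewrite sumrB sumr_const card_ord mulr_natl.
Qed.

Lemma surrogateE th : dom th ->
  surrogate th = (N%:R * (coupling l th sample_mean - ln (partition th)))%:E.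
Proof.
move=> hd; rewrite /surrogate clamE ?phiE //.
exact: affine_mean_gt0 N_gt0 (fun i => xs_supp i hd).
Qed.

Lemma loglik_eq_surrogate th : l = 0 -> dom th -> loglik th = surrogate th.
Proof. by move=> l0 hd; rewrite loglikE // surrogateE // sum_coupling_eq // mulrBr. Qed.

Lemma surrogate_le_loglik th : l < 0 -> dom th -> (surrogate th <= loglik th)%E.
Proof.
move=> l_lt0 hd; rewrite loglikE // surrogateE // lee_fin mulrBr lerD2r.
exact: sum_coupling_ge (fun i => xs_supp i hd) l_lt0.
Qed.

Lemma loglik_le_surrogate th : 0 < l -> dom th -> (loglik th <= surrogate th)%E.
Proof.
move=> l_gt0 hd; rewrite loglikE // surrogateE // lee_fin mulrBr lerD2r.
exact: sum_coupling_le (fun i => xs_supp i hd) l_gt0.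
Qed.

End sample.

Section escort.
Hypothesis alpha_gt0 : 0 < 1 - l.
Hypothesis hB : assumptionB m T l.
Variable ths : 'rV[R]_n.
Hypothesis dom_ths : dom ths.

Local Notation qs := (q ths).
Local Notation E := (escort_mean m T l ths).

Lemma supp_common th : dom th -> supp T l th = supp T l ths.
Proof. by case: hB => -[S [_ hS]] _ hd; rewrite (hS _ hd) (hS _ dom_ths). Qed.

Lemma qs_compatible : compatible m T l qs ths.
Proof. by case: hB => _ /(_ ths dom_ths ths dom_ths). Qed.

Lemma restrict_qdens x : (if `[< supp T l ths x >] then qs x else 0) = qs x.
Proof. by case: asboolP => // /(qdens_nsupp dom_ths) ->. Qed.

Definition qalpha x := qs x `^ (1 - l).
Definition mass_qalpha := \int[m]_x qalpha x.

Lemma qalpha_nsupp x : ~ supp T l ths x -> qalpha x = 0.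
Proof. by move=> hx; rewrite /qalpha qdens_nsupp // powR0 // gt_eqF. Qed.

Lemma integrable_qalpha : m.-integrable setT (EFin \o qalpha).
Proof.
have [_ [+ _]] := qs_compatible; under eq_integral do rewrite restrict_qdens.
move=> qalpha_lty; apply: integrable_ge0_lty => // [|x]; last exact: powR_ge0.
exact: measurableT_comp (measurable_powR _) (measurable_qdens dom_ths).
Qed.

Lemma mass_qalpha_gt0 : 0 < mass_qalpha.
Proof.
have [+ _] := qs_compatible; under eq_integral do rewrite restrict_qdens.
by rewrite -EFin_Rintegral ?lte_fin //; exact: integrable_qalpha.
Qed.

Lemma integrable_T_qalpha i : m.-integrable setT (EFin \o fun x => T x 0 i * qalpha x).
Proof.
have [_ [_ intT]] := qs_compatible.
by apply: eq_integrable (intT i) => // x _ /=; rewrite restrict_qdens.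
Qed.

Lemma dot_qalphaE u x : dot u (T x) * qalpha x = \sum_i u 0 i * (T x 0 i * qalpha x).
Proof. by rewrite /dot mulr_suml; apply: eq_bigr => i _; rewrite mulrA. Qed.

Lemma integrable_dot_qalpha u :
  m.-integrable setT (EFin \o fun x => dot u (T x) * qalpha x).
Proof.
have := integrableR_sum (index_enum 'I_n)
  (fun i => integrableRZl (u 0 i) (integrable_T_qalpha i)).
by apply: eq_integrable => // x _ /=; rewrite dot_qalphaE.
Qed.

Lemma dot_escort_mean u : dot u E * mass_qalpha = \int[m]_x (dot u (T x) * qalpha x).
Proof.
under eq_Rintegral do rewrite dot_qalphaE.
rewrite Rintegral_sum => [|i]; last exact: integrableRZl (integrable_T_qalpha i).
rewrite /dot mulr_suml; apply: eq_bigr => i _.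
rewrite RintegralZl //; last exact: integrable_T_qalpha.
by rewrite mxE -mulrA divfK // gt_eqF //; exact: mass_qalpha_gt0.
Qed.

Lemma integrable_affine_qalpha a u :
  m.-integrable setT (EFin \o fun x => (a + dot u (T x)) * qalpha x).
Proof.
have := integrableRD (integrableRZl a integrable_qalpha) (integrable_dot_qalpha u).
by apply: eq_integrable => // x _ /=; rewrite mulrDl.
Qed.

Lemma Rintegral_affine_qalpha a u :
  \int[m]_x ((a + dot u (T x)) * qalpha x) = (a + dot u E) * mass_qalpha.
Proof.
under eq_Rintegral do rewrite mulrDl.
rewrite RintegralD //; last exact: integrable_dot_qalpha.
  by rewrite RintegralZl -?dot_escort_mean ?mulrDl //; exact: integrable_qalpha.
exact/integrableRZl/integrable_qalpha.
Qed.

(* Its integral is read off the escort mean, while pointwise it is the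
   weighted geometric mean q_th^l q_ths^(1 - l) of [qmix_supp]. *)
Definition qmix th x := (1 + l * dot th (T x)) * qalpha x * expR (- l * ln (partition th)).

Lemma integrable_qmix th : m.-integrable setT (EFin \o qmix th).
Proof.
apply: integrableRZr; have := integrable_affine_qalpha 1 (l *: th).
by apply: eq_integrable => // x _ /=; rewrite dotZl.
Qed.

Lemma Rintegral_qmix th :
  \int[m]_x qmix th x = (1 + l * dot th E) * mass_qalpha * expR (- l * ln (partition th)).
Proof.
rewrite /qmix; under eq_Rintegral do rewrite -dotZl.
rewrite RintegralZr ?Rintegral_affine_qalpha ?dotZl //; exact: integrable_affine_qalpha.
Qed.

Lemma qmix_supp th x : dom th -> l != 0 -> supp T l ths x ->
  qmix th x = expR (l * ln (q th x) + (1 - l) * ln (qs x)).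
Proof.
move=> hd l_neq0 xS; have xS' : supp T l th x by rewrite supp_common.
rewrite /qmix /qalpha !ln_qdens // (qdens_supp dom_ths) // -expRM.
by rewrite -(expR_coupling l_neq0 xS') -!expRD; congr expR; ring.
Qed.

Lemma qmix_le th x : dom th -> l != 0 ->
  l * qmix th x <= l * (l * q th x + (1 - l) * qs x).
Proof.
move=> hd l_neq0; have [xS|xNS] := asboolP (supp T l ths x).
  have xS' : supp T l th x by rewrite supp_common.
  by rewrite qmix_supp //; apply: weighted_amgm; [rewrite -subr_gt0 | exact: qdens_gt0 ..].
rewrite /qmix qalpha_nsupp // !qdens_nsupp ?supp_common //.
by rewrite !(mulr0, mul0r, addr0).
Qed.

Lemma qmix_star x : l != 0 -> qmix ths x = qs x.
Proof.
move=> l_neq0; have [xS|xNS] := asboolP (supp T l ths x).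
  by rewrite qmix_supp // -mulrDl subrKC mul1r lnK // posrE qdens_gt0.
by rewrite /qmix qalpha_nsupp // qdens_nsupp // mulr0 mul0r.
Qed.

Lemma mass_qmix_le th : dom th -> l != 0 -> l * \int[m]_x qmix th x <= l.
Proof.
move=> hd l_neq0; rewrite -RintegralZl //; last exact: integrable_qmix.
rewrite -[leRHS]mulr1 -[in leRHS](subrKC l 1) -(Rintegral_qdens_comb l (1 - l) hd dom_ths).
rewrite -RintegralZl //; last exact: integrable_qdens_comb.
apply: le_Rintegral => //; [exact/integrableRZl/integrable_qmix |
  exact/integrableRZl/integrable_qdens_comb | move=> x _; exact: qmix_le].
Qed.

Lemma mass_qmix_star : l != 0 -> \int[m]_x qmix ths x = 1.
Proof.
move=> l_neq0; under eq_Rintegral do rewrite qmix_star //.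
exact: Rintegral_qdens.
Qed.

Lemma ln_mass_qmix th : dom th -> l != 0 -> 0 < 1 + l * dot th E ->
  ln (\int[m]_x qmix th x) / l = coupling l th E + ln mass_qalpha / l - ln (partition th).
Proof.
move=> hd l_neq0 hE; rewrite Rintegral_qmix !lnM ?posrE ?mulr_gt0 ?expR_gt0 ?mass_qalpha_gt0 //.
by rewrite expRK /coupling (negbTE l_neq0); field.
Qed.

Lemma clam_escort_le th : dom th -> l != 0 ->
  (clam l th E - phi m T l th <= (- (ln mass_qalpha / l))%:E)%E.
Proof.
move=> hd l_neq0; rewrite phiE //.
have [hE|hE] := boolP (0 < 1 + l * dot th E); last by rewrite clam_Ny //= leNye.
have mass_gt0 : 0 < \int[m]_x qmix th x.
  by rewrite Rintegral_qmix !mulr_gt0 ?expR_gt0 ?mass_qalpha_gt0.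
have := ln_div_le0 mass_gt0 (mass_qmix_le hd l_neq0).
by rewrite clamE // -EFinB lee_fin ln_mass_qmix //; lra.
Qed.

Lemma clam_escort_star : l != 0 ->
  (clam l ths E - phi m T l ths = (- (ln mass_qalpha / l))%:E)%E.
Proof.
move=> l_neq0; have hE : 0 < 1 + l * dot ths E.
  have We_gt0 : 0 < mass_qalpha * expR (- l * ln (partition ths)).
    by rewrite mulr_gt0 ?expR_gt0 ?mass_qalpha_gt0.
  by rewrite -(pmulr_lgt0 _ We_gt0) mulrA -Rintegral_qmix mass_qmix_star.
have := ln_mass_qmix dom_ths l_neq0 hE; rewrite mass_qmix_star // ln1 mul0r.
by rewrite clamE // phiE // -EFinB => ?; congr EFin; lra.
Qed.

Lemma psi_star : l != 0 -> psi m T l ths = (- (ln mass_qalpha / l))%:E.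
Proof.
move=> l_neq0; rewrite /psi /renyi ifN; last by rewrite eq_sym -subr_eq0 opprB subrKC.
rewrite -[X in elog X]EFin_Rintegral; last exact: integrable_qalpha.
by rewrite /= mass_qalpha_gt0 -EFinM -EFinN opprB addrC subrK mulrC.
Qed.

Lemma qalpha_l0 x : l = 0 -> qalpha x = qs x.
Proof. by move=> l0; rewrite /qalpha [in 1 - l]l0 subr0 powRr1 // qdens_ge0. Qed.

(* Integrate against q_ths the tangent inequality of exp at
   c = <th - ths, E>, the q_ths-mean of <th - ths, T>. *)
Lemma gibbs th : dom th -> l = 0 ->
  dot th E - ln (partition th) <= dot ths E - ln (partition ths).
Proof.
move=> hd l0; have l0' : l == 0 by apply/eqP.
have supp_all u x : supp T l u x by rewrite /supp /= l0 mul0r addr0.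
have W1 : mass_qalpha = 1.
  by rewrite /mass_qalpha; under eq_Rintegral do rewrite qalpha_l0 //; exact: Rintegral_qdens.
set c := dot (th - ths) E.
set r := ln (partition th) - ln (partition ths).
have tangent x : expR c * ((1 - c + dot (th - ths) (T x)) * qalpha x) <= q th x * expR r.
  rewrite qalpha_l0 // !qdens_supp // /coupling l0' -expRD.
  have -> : dot th (T x) - ln (partition th) + r =
      dot (th - ths) (T x) + (dot ths (T x) - ln (partition ths)) by rewrite /r dotBl; ring.
  rewrite [in leRHS]expRD mulrA ler_wpM2r ?expR_ge0 //.
  by have := expR_tangent_le c (dot (th - ths) (T x)); rewrite addrA [1 - c + _]addrAC.
have := le_Rintegral measurableT (integrableRZl (expR c) (integrable_affine_qalpha (1 - c) (th - ths)))
  (integrableRZr (expR r) (integrable_qdens hd)) (fun x _ => tangent x).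
rewrite RintegralZl ?Rintegral_affine_qalpha ?integrable_affine_qalpha //.
rewrite RintegralZr ?Rintegral_qdens ?integrable_qdens // W1 subrK !mulr1 mul1r ler_expR.
by rewrite /c /r dotBl; lra.
Qed.

Lemma clam_escort_max th : dom th ->
  (clam l th E - phi m T l th <= clam l ths E - phi m T l ths)%E.
Proof.
move=> hd; have [l0|l_neq0] := eqVneq l 0; last by rewrite clam_escort_star //; exact: clam_escort_le.
have supp0 u v : 0 < 1 + l * dot u v by rewrite l0 mul0r addr0.
have l0' : l == 0 by apply/eqP.
by rewrite !clamE // !phiE // -!EFinB lee_fin /coupling l0'; exact: gibbs.
Qed.

Variables (N : nat) (xs : 'I_N -> X).
Hypothesis N_gt0 : (0 < N)%N.
Hypothesis xs_supp : forall i th, dom th -> supp T l th (xs i).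
Hypothesis escort_sample : E = sample_mean xs.

Lemma surrogate_le_star th : dom th -> (surrogate xs th <= surrogate xs ths)%E.
Proof.
move=> hd; rewrite /surrogate -escort_sample lee_wpmul2l ?lee_fin ?ler0n //.
exact: clam_escort_max.
Qed.

Lemma surrogate_star : l != 0 -> surrogate xs ths = (N%:R%:E * psi m T l ths)%E.
Proof. by move=> l_neq0; rewrite /surrogate -escort_sample clam_escort_star // psi_star. Qed.

Lemma psi_le_mean_loglik : l < 0 -> (psi m T l ths <= N%:R^-1%:E * loglik xs ths)%E.
Proof.
move=> l_lt0; rewrite lee_pdivlMl ?ltr0n // -surrogate_star ?lt_eqF //.
exact: surrogate_le_loglik.
Qed.

Lemma mean_loglik_le_psi th : 0 < l -> dom th ->
  (N%:R^-1%:E * loglik xs th <= psi m T l ths)%E.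
Proof.
move=> l_gt0 hd; rewrite lee_pdivrMl ?ltr0n // -surrogate_star ?gt_eqF //.
exact: le_trans (loglik_le_surrogate N_gt0 xs_supp l_gt0 hd) (surrogate_le_star hd).
Qed.

End escort.

End lambda_family.

Theorem proposition10 (R : realType) (n : nat) (d : measure_display)
  (X : measurableType d) (m : {measure set X -> \bar R}) (T : X -> 'rV[R]_n)
  (l : R) (N : nat) (x : 'I_N -> X) (th_star : 'rV[R]_n) :
  (forall i : 'I_n, measurable_fun setT (fun y => T y 0 i)) ->
  0 < 1 - l ->
  assumptionA m T l ->
  assumptionB m T l ->
  (0 < N)%N ->
  (forall (i : 'I_N) th, dom_phi m T l th -> supp T l th (x i)) ->
  dom_phi m T l th_star ->
  escort_mean m T l th_star = N%:R^-1 *: \sum_(i < N) T (x i) ->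
  let Tbar := N%:R^-1 *: \sum_(i < N) T (x i) in
  let ell := fun th => (\sum_(i < N) ln (qdens m T l th (x i)))%:E in
  let F := fun th => (N%:R%:E * (clam l th Tbar - phi m T l th))%E in
  (l = 0 -> forall th, dom_phi m T l th -> (ell th <= ell th_star)%E) /\
  (l < 0 ->
     (forall th, dom_phi m T l th -> (F th <= F th_star)%E) /\
     (forall th, dom_phi m T l th -> (F th <= ell th)%E) /\
     (psi m T l th_star <= N%:R^-1%:E * ell th_star)%E) /\
  (0 < l ->
     (forall th, dom_phi m T l th -> (F th <= F th_star)%E) /\
     (forall th, dom_phi m T l th -> (ell th <= F th)%E) /\
     (forall th, dom_phi m T l th -> (N%:R^-1%:E * ell th <= psi m T l th_star)%E)).
Proof.
move=> mT al [_ [phi_neqNy _]] hB N_gt0 xs_supp dom_star escort_sample.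
have le_star th (hd : dom_phi m T l th) :=
  surrogate_le_star mT phi_neqNy al hB dom_star escort_sample hd.
split; [move=> l0 th hd | split=> [l_lt0 | l_gt0]].
- have := le_star th hd.
  by rewrite -!(loglik_eq_surrogate phi_neqNy N_gt0 xs_supp l0).
- split; [exact: le_star | split].
  + by move=> th /(surrogate_le_loglik phi_neqNy N_gt0 xs_supp l_lt0).
  + by have := psi_le_mean_loglik mT phi_neqNy al hB dom_star N_gt0 xs_supp escort_sample l_lt0.
- split; [exact: le_star | split].
  + by move=> th /(loglik_le_surrogate phi_neqNy N_gt0 xs_supp l_gt0).
  + by move=> th /(mean_loglik_le_psi mT phi_neqNy al hB dom_star N_gt0 xs_supp
      escort_sample l_gt0).
Qed.
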